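(* Let $m$ be a positive integer and let $\mathcal D$ be a distribution on $G_m\times\{0,1\}$, where $G_m=\{0,1/m,\ldots,1\}$. Then $\mathsf{CDL}(\mathcal D)\le2\,\mathsf{SCDL}_m(\mathcal D)+2/m$.
   Context: For $x\in\mathbb R$ write $x_+=\max\{x,0\}$. For a distribution $\mathcal D$ of $(p,y)\in[0,1]\times\{0,1\}$ and $i\in\{0,\ldots,m\}$, let $w_i(p)=(1-|mp-i|)_+$, $\pi_i=\mathbb E_{\mathcal D}[w_i(p)]$ and $q_i=\mathbb E_{\mathcal D}[w_i(p)y]/\pi_i$ (terms with $\pi_i=0$ are $0$; when $p\in G_m$ these are $\Pr[p=i/m]$ and $\mathbb E[y\mid p=i/m]$). Define $$\mathsf{SCDL}_m(\mathcal D)=\max_{i=0,\ldots,m}\Big(\sum_{j=0}^{i}\pi_j\big(q_j-\tfrac{i+1}{m}\big)_+ +\sum_{j=i+1}^{m}\pi_j\big(\tfrac im-q_j\big)_+\Big).$$ A decision task $Z=(A,U)$ has action set $A$ and utility $U:A\times\{0,1\}\to[0,1]$; its best-response function is $r_Z^*(p)\in\arg\max_{a\in A}\mathbb E_{y\sim\mathsf{Ber}(p)}U(a,y)$; the swap regret of a response $r$ is $\mathsf{SR}_Z(r,\mathcal D)=\sup_{\sigma:A\to A}\mathbb E_{(p,y)\sim\mathcal D}[U(\sigma(r(p)),y)-U(r(p),y)]$. The calibration decision loss is $\mathsf{CDL}(\mathcal D)=\sup_Z\mathsf{SR}_Z(r_Z^*,\mathcal D)$ over all such decision tasks. *)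

From mathcomp Require Import all_boot all_order all_algebra.
Set Implicit Arguments. Unset Strict Implicit. Unset Printing Implicit Defensive.
Import Order.TTheory GRing.Theory Num.Theory.
Local Open Scope ring_scope.

Definition pospart (R : realFieldType) (x : R) : R := Num.max x 0.

(* A distribution on G_m x {0,1}: the point (k/m, y) has mass D k y,
   for k : 'I_m.+1 and y : bool. *)
Definition is_distr (R : realFieldType) (m : nat) (D : 'I_m.+1 -> bool -> R) :=
  (forall k y, 0 <= D k y) /\ \sum_(k < m.+1) \sum_(y : bool) D k y = 1.

Definition gridpt (R : realFieldType) (m : nat) (k : 'I_m.+1) : R := k%:R / m%:R.

Definition wt (R : realFieldType) (m i : nat) (p : R) : R :=
  pospart (1 - `|m%:R * p - i%:R|).

Definition piw (R : realFieldType) (m : nat) (D : 'I_m.+1 -> bool -> R) (i : nat) : R :=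
  \sum_(k < m.+1) \sum_(y : bool) D k y * wt m i (gridpt R k).

Definition qw (R : realFieldType) (m : nat) (D : 'I_m.+1 -> bool -> R) (i : nat) : R :=
  if piw D i == 0 then 0 else
  (\sum_(k < m.+1) \sum_(y : bool) D k y * wt m i (gridpt R k) * (y : nat)%:R) / piw D i.

Definition SCDL (R : realFieldType) (m : nat) (D : 'I_m.+1 -> bool -> R) : R :=
  \big[Num.max/0]_(i < m.+1)
    (\sum_(j < m.+1 | (j <= i)%N) piw D j * pospart (qw D j - (i.+1)%:R / m%:R)
   + \sum_(j < m.+1 | (i < j)%N) piw D j * pospart ((i : nat)%:R / m%:R - qw D j)).

Definition exp_util (R : realFieldType) (A : Type) (U : A -> bool -> R) (p : R) (a : A) : R :=
  p * U a true + (1 - p) * U a false.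

Definition is_best_response (R : realFieldType) (A : Type) (U : A -> bool -> R)
  (r : R -> A) : Prop :=
  forall p : R, 0 <= p <= 1 -> forall a : A, exp_util U p a <= exp_util U p (r p).

Definition swap_gain (R : realFieldType) (m : nat) (D : 'I_m.+1 -> bool -> R)
  (A : Type) (U : A -> bool -> R) (r : R -> A) (sigma : A -> A) : R :=
  \sum_(k < m.+1) \sum_(y : bool)
     D k y * (U (sigma (r (gridpt R k))) y - U (r (gridpt R k)) y).

From mathcomp Require Import all_boot all_order all_algebra.
From mathcomp Require Import ring lra.
Set Implicit Arguments. Unset Strict Implicit. Unset Printing Implicit Defensive.
Import Order.TTheory GRing.Theory Num.Theory.
Local Open Scope ring_scope.

(* The value function V(p) = max_a E_{y ~ Ber(p)} U(a, y) is convex with slopes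
   in [-1, 1].  Since a best response is tangent to V, comparing it on the grid
   p_j = j/m with the piecewise-linear interpolant of V bounds the regret of
   reporting p_k when the true frequency is q by a mixture of the regrets of
   the two-action tasks whose best response switches at p_j, weighted by the
   kinks of the interpolant (of total mass 2).  For each j, the expected
   regret of that task is within 1/m of a term of SCDL_m: the term i = j if
   q_j >= p_j, and the term i = j - 1 otherwise. *)

Section PosPart.
Variable R : realFieldType.
Implicit Types x c : R.

Lemma pospart_ge0 x : 0 <= pospart x.
Proof. by rewrite le_max lexx orbT. Qed.

Lemma pospart_ge x : x <= pospart x.
Proof. by rewrite le_max lexx. Qed.

Lemma pospart_eq0 x : x <= 0 -> pospart x = 0.
Proof. exact: max_r. Qed.

Lemma pospartDr x c : 0 <= c -> pospart (x + c) <= pospart x + c.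
Proof.
move=> c_ge0; rewrite ge_max lerD2r pospart_ge /=.
by rewrite addr_ge0 ?pospart_ge0.
Qed.

End PosPart.

Lemma ler_sum_subrange (R : realDomainType) (F G : nat -> R) a b n :
  (b <= n)%N -> (forall j, 0 <= G j) -> (forall j, (a <= j < b)%N -> F j <= G j) ->
  \sum_(a <= j < b) F j <= \sum_(0 <= j < n) G j.
Proof.
move=> le_bn G_ge0 /ler_sum_nat /le_trans; apply.
have G0 s P : 0 <= \sum_(j <- s | P j) G j by apply: sumr_ge0.
have [le_ab|/ltnW le_ba] := leqP a b; last by rewrite big_geq.
rewrite [leRHS](@big_cat_nat _ _ _ a) ?(leq_trans le_ab) //=.
by rewrite [X in _ <= _ + X](@big_cat_nat _ _ _ b) //= addrCA lerDl addr_ge0.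
Qed.

Lemma affine_le0_between (R : realDomainType) (a b x alpha beta : R) :
  a <= x <= b -> alpha + beta * a <= 0 -> alpha + beta * b <= 0 ->
  alpha + beta * x <= 0.
Proof.
move=> /andP[le_ax le_xb] fa fb; have [beta_ge0|beta_lt0] := lerP 0 beta.
  by apply: le_trans fb; rewrite lerD2l ler_wpM2l.
by apply: le_trans fa; rewrite lerD2l ler_wnM2l // ltW.
Qed.

Definition grid (R : realFieldType) (m j : nat) : R := j%:R / m%:R.

Section Grid.
Variables (R : realFieldType) (m : nat).
Hypothesis m_gt0 : (0 < m)%N.
Local Notation p := (grid R m).

Lemma grid_ge0 j : 0 <= p j.
Proof. by rewrite divr_ge0 ?ler0n. Qed.

Lemma grid_succ j : p j.+1 = p j + m%:R^-1.
Proof. by rewrite /grid -natr1 mulrDl mul1r. Qed.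

Lemma ler_grid i j : (p i <= p j) = (i <= j)%N.
Proof. by rewrite ler_pM2r ?invr_gt0 ?ltr0n // ler_nat. Qed.

Lemma pospart_sub_grid_succ x j : pospart (x - p j) <= pospart (x - p j.+1) + m%:R^-1.
Proof.
have -> : x - p j = x - p j.+1 + m%:R^-1 by rewrite grid_succ; ring.
by apply: pospartDr; rewrite invr_ge0 ler0n.
Qed.

Lemma pospart_grid_succ_sub x j : pospart (p j.+1 - x) <= pospart (p j - x) + m%:R^-1.
Proof.
rewrite grid_succ addrAC.
by apply: pospartDr; rewrite invr_ge0 ler0n.
Qed.

Lemma grid_le1 j : (j <= m)%N -> p j <= 1.
Proof. by move=> le_jm; rewrite ler_pdivrMr ?ltr0n // mul1r ler_nat. Qed.

Lemma grid_last : p m = 1.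
Proof. by rewrite /grid mulfV // pnatr_eq0 -lt0n. Qed.

Lemma exists_grid_cell (q : R) : 0 <= q <= 1 ->
  exists2 l, (l < m)%N & p l <= q <= p l.+1.
Proof.
move=> /andP[q_ge0 q_le1].
have sweep n : (exists2 l, (l < n)%N & p l <= q <= p l.+1) \/ p n <= q.
  elim: n => [|n [[l lt_ln cell]|le_nq]]; first by right; rewrite /grid mul0r.
    by left; exists l => //; apply: ltnW.
  have [lt_qn1|le_n1q] := ltrP q (p n.+1); last by right.
  by left; exists n; rewrite // le_nq ltW.
have [[l lt_lm cell]|le_mq] := sweep m; first by exists l.
exists m.-1; first by rewrite prednK.
by rewrite prednK // grid_last q_le1 andbT (le_trans _ le_mq) // ler_grid leq_pred.
Qed.

End Grid.

(* Regret at frequency q of reporting p_k in the task whose best response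
   switches at p_j; at k = j both one-sided regrets are charged. *)
Definition threshold_regret (R : realFieldType) (m j k : nat) (q : R) : R :=
  (if (k <= j)%N then pospart (q - grid R m j) else 0) +
  (if (j <= k)%N then pospart (grid R m j - q) else 0).

(* piw D k * scdl_term m i k (qw D k) is the k-th summand of the i-th term of
   SCDL_m. *)
Definition scdl_term (R : realFieldType) (m i k : nat) (q : R) : R :=
  (if (k <= i)%N then pospart (q - grid R m i.+1) else 0) +
  (if (i < k)%N then pospart (grid R m i - q) else 0).

Section ThresholdRegret.
Variables (R : realFieldType) (m j k : nat) (q : R).
Local Notation psi := (threshold_regret m j k q).

Lemma threshold_regret_ge0 : 0 <= psi.
Proof. by apply: addr_ge0; case: ifP => // _; apply: pospart_ge0. Qed.

Lemma threshold_regret_ge_above : (k <= j)%N -> q - grid R m j <= psi.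
Proof.
move=> le_kj; rewrite /threshold_regret le_kj; apply: le_trans (pospart_ge _) _.
by rewrite lerDl; case: ifP => // _; apply: pospart_ge0.
Qed.

Lemma threshold_regret_ge_below : (j <= k)%N -> grid R m j - q <= psi.
Proof.
move=> le_jk; rewrite /threshold_regret le_jk; apply: le_trans (pospart_ge _) _.
by rewrite lerDr; case: ifP => // _; apply: pospart_ge0.
Qed.

Lemma threshold_regret_le_scdl_term : (k == j -> grid R m j <= q) ->
  psi <= scdl_term m j k q + m%:R^-1.
Proof.
move=> at_j; rewrite /threshold_regret /scdl_term.
case: (ltngtP k j) => [lt_kj|lt_jk|eq_kj] /=.
- by rewrite !addr0 pospart_sub_grid_succ.
- by rewrite !add0r lerDl invr_ge0 ler0n.
have le_jq : grid R m j <= q by apply: at_j; rewrite eq_kj.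
rewrite (pospart_eq0 (_ : grid R m j - q <= 0)) ?subr_le0 //.
by rewrite !addr0 pospart_sub_grid_succ.
Qed.

End ThresholdRegret.

Lemma threshold_regret_le_scdl_term_pred (R : realFieldType) (m i k : nat) (q : R) :
  (k == i.+1 -> q <= grid R m i.+1) ->
  threshold_regret m i.+1 k q <= scdl_term m i k q + m%:R^-1.
Proof.
move=> at_j; rewrite /threshold_regret /scdl_term.
case: (ltngtP k i.+1) => [lt_kj|lt_jk|eq_kj] /=.
- by rewrite ltnS in lt_kj; rewrite lt_kj !addr0 lerDl invr_ge0 ler0n.
- by rewrite leqNgt (ltn_trans (ltnSn i) lt_jk) /= !add0r pospart_grid_succ_sub.
have le_qj : q <= grid R m i.+1 by apply: at_j; rewrite eq_kj.
rewrite eq_kj ltnn (pospart_eq0 (_ : q - grid R m i.+1 <= 0)) ?subr_le0 //.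
by rewrite !add0r pospart_grid_succ_sub.
Qed.

Definition slope (R : realFieldType) (A : Type) (U : A -> bool -> R) (a : A) : R :=
  U a true - U a false.

Lemma exp_utilE (R : realFieldType) (A : Type) (U : A -> bool -> R) q a :
  exp_util U q a = U a false + q * slope U a.
Proof. by rewrite /exp_util /slope; ring. Qed.

Section ValueFunction.
Variables (R : realFieldType) (m : nat) (A : Type) (U : A -> bool -> R) (r : R -> A).
Hypothesis m_gt0 : (0 < m)%N.
Hypothesis U01 : forall a y, 0 <= U a y <= 1.
Hypothesis r_best : is_best_response U r.
Local Notation p := (grid R m).

Definition value j : R := exp_util U (p j) (r (p j)).

(* Slope of the interpolant of [value] on [p (j - 1), p j]; the sentinels -1
   and 1 are the extreme slopes of an expected utility, so every [kink] is
   nonnegative and the kinks sum to 2. *)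
Definition chord j : R :=
  if j == 0%N then -1 else if (j <= m)%N then m%:R * (value j - value j.-1) else 1.

Definition kink j : R := chord j.+1 - chord j.

Lemma exp_util_le_value a j : (j <= m)%N -> exp_util U (p j) a <= value j.
Proof. by move=> le_jm; apply: r_best; rewrite grid_ge0 grid_le1. Qed.

Lemma exp_util_responseE j q :
  exp_util U q (r (p j)) = value j + slope U (r (p j)) * (q - p j).
Proof. by rewrite /value !exp_utilE; ring. Qed.

Lemma value_ge_tangent j i : (i <= m)%N ->
  value j + slope U (r (p j)) * (p i - p j) <= value i.
Proof. by move=> le_im; rewrite -exp_util_responseE exp_util_le_value. Qed.

Lemma value_succ j : (j < m)%N -> value j.+1 = value j + chord j.+1 / m%:R.
Proof.
move=> lt_jm; rewrite /chord /= lt_jm mulrAC divff ?pnatr_eq0 -?lt0n //.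
by rewrite mul1r addrC subrK.
Qed.

Lemma slope_bounds j : (j <= m)%N -> chord j <= slope U (r (p j)) <= chord j.+1.
Proof.
move=> le_jm; have h_gt0 : 0 < m%:R^-1 :> R by rewrite invr_gt0 ltr0n.
have s_bounds : -1 <= slope U (r (p j)) <= 1.
  by move: (U01 (r (p j)) true) (U01 (r (p j)) false); rewrite /slope; lra.
apply/andP; split.
  case: j le_jm s_bounds => [|i] lt_im s_bounds; first by case/andP: s_bounds.
  rewrite -(ler_pM2r h_gt0); have := value_ge_tangent i.+1 (ltnW lt_im).
  by rewrite value_succ // grid_succ; lra.
have [lt_jm|ge_jm] := ltnP j m; last by rewrite /chord /= ltnNge ge_jm; case/andP: s_bounds.
rewrite -(ler_pM2r h_gt0); have := value_ge_tangent j lt_jm.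
by rewrite value_succ // grid_succ; lra.
Qed.

Lemma kink_ge0 j : 0 <= kink j.
Proof.
rewrite subr_ge0; have [le_jm|lt_mj] := leqP j m.
  by case/andP: (slope_bounds le_jm) => /le_trans; apply.
have j_gt0 : (0 < j)%N := leq_ltn_trans (leq0n m) lt_mj.
by rewrite /chord /= eqn0Ngt j_gt0 leqNgt lt_mj ltnNge (ltnW lt_mj).
Qed.

Lemma sum_kink : \sum_(0 <= j < m.+1) kink j = 2.
Proof. by rewrite telescope_sumr // /chord /= ltnn opprK. Qed.

Lemma chord_line_succ j x : (j < m)%N ->
  value j.+1 + chord j.+1 * (x - p j.+1) = value j + chord j.+1 * (x - p j).
Proof. by move=> lt_jm; rewrite value_succ // grid_succ; ring. Qed.

Lemma sum_kink_line a b x : (a <= b <= m)%N ->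
  \sum_(a <= j < b.+1) kink j * (x - p j) =
  value b + chord b.+1 * (x - p b) - (value a + chord a * (x - p a)).
Proof.
move=> /andP[le_ab le_bm]; rewrite big_nat_recr //=.
rewrite (eq_big_nat _ _ (F2 := fun j => value j.+1 + chord j.+1 * (x - p j.+1)
                                  - (value j + chord j * (x - p j)))); last first.
  by move=> j /andP[_ lt_jb]; rewrite chord_line_succ ?(leq_trans lt_jb) // /kink; ring.
by rewrite telescope_sumr // /kink; ring.
Qed.

Lemma exp_util_le_secant a l q : (l < m)%N -> p l <= q <= p l.+1 ->
  exp_util U q a <= value l + chord l.+1 * (q - p l).
Proof.
move=> lt_lm cell; rewrite -subr_le0 exp_utilE.
pose alpha := U a false - value l + chord l.+1 * p l.
pose beta := slope U a - chord l.+1.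
have affine x : U a false + x * slope U a - (value l + chord l.+1 * (x - p l)) =
    alpha + beta * x by rewrite /alpha /beta; ring.
rewrite affine; apply: (affine_le0_between cell); rewrite -affine.
  by have := exp_util_le_value a (ltnW lt_lm); rewrite exp_utilE; lra.
by have := exp_util_le_value a lt_lm; rewrite exp_utilE -chord_line_succ //; lra.
Qed.

Lemma regret_le_threshold_mixture a k q : (k <= m)%N -> 0 <= q <= 1 ->
  exp_util U q a - exp_util U q (r (p k)) <=
  \sum_(0 <= j < m.+1) kink j * threshold_regret m j k q.
Proof.
move=> le_km q01; have [l lt_lm cell] := exists_grid_cell m_gt0 q01.
have /andP[le_lq le_ql1] := cell.
have mixture_ge0 j : 0 <= kink j * threshold_regret m j k q.
  by rewrite mulr_ge0 ?kink_ge0 ?threshold_regret_ge0.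
have secant := exp_util_le_secant a lt_lm cell.
have /andP[chord_le_slope slope_le_chord] := slope_bounds le_km.
rewrite exp_util_responseE; have [le_kl|lt_lk] := leqP k l.
  have le_kq : p k <= q by rewrite (le_trans _ le_lq) // ler_grid.
  apply: le_trans (@ler_sum_subrange _ (fun j => kink j * (q - p j)) _ k l.+1 m.+1
                     (ltnW lt_lm) mixture_ge0 _).
    rewrite sum_kink_line ?le_kl ?(ltnW lt_lm) //.
    have : chord k * (q - p k) <= slope U (r (p k)) * (q - p k).
      by rewrite ler_wpM2r // subr_ge0.
    lra.
  move=> j /andP[le_kj _]; rewrite ler_wpM2l ?kink_ge0 //.
  exact: threshold_regret_ge_above.
have le_qk : q <= p k by rewrite (le_trans le_ql1) // ler_grid.
apply: le_trans (@ler_sum_subrange _ (fun j => kink j * (p j - q)) _ l.+1 k.+1 m.+1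
                   le_km mixture_ge0 _).
  have -> : \sum_(l.+1 <= j < k.+1) kink j * (p j - q) =
            - \sum_(l.+1 <= j < k.+1) kink j * (q - p j).
    by rewrite -sumrN; apply: eq_bigr => j _; ring.
  rewrite sum_kink_line ?lt_lk //.
  have : chord k.+1 * (q - p k) <= slope U (r (p k)) * (q - p k).
    by rewrite ler_wnM2r // subr_le0.
  rewrite -(chord_line_succ q lt_lm) in secant; lra.
move=> j /andP[_ lt_jk]; rewrite ler_wpM2l ?kink_ge0 //.
exact: threshold_regret_ge_below.
Qed.

End ValueFunction.

Section GridDistribution.
Variables (R : realFieldType) (m : nat) (D : 'I_m.+1 -> bool -> R).
Hypothesis m_gt0 : (0 < m)%N.
Hypothesis D_distr : is_distr D.

Lemma D_ge0 k y : 0 <= D k y.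
Proof. by case: D_distr. Qed.

Lemma wt_grid i k : wt m i (grid R m k) = (k == i)%:R.
Proof.
rewrite /wt /grid mulrCA divff ?pnatr_eq0 -?lt0n // mulr1.
have [->|ne_ki] := eqVneq k i; first by rewrite subrr normr0 subr0 /pospart max_l ?ler01.
apply: pospart_eq0; rewrite subr_le0.
case: (ltngtP k i) ne_ki => [lt_ki _|lt_ik _|-> /eqP//].
  by rewrite distrC -natrB ?(ltnW lt_ki) // normr_nat ler1n subn_gt0.
by rewrite -natrB ?(ltnW lt_ik) // normr_nat ler1n subn_gt0.
Qed.

Lemma sum_grid_wt (k : 'I_m.+1) (F : 'I_m.+1 -> bool -> R) :
  \sum_(k' < m.+1) \sum_(y : bool) F k' y * wt m k (gridpt R k') = \sum_(y : bool) F k y.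
Proof.
rewrite (bigD1 k) //= [X in _ + X]big1 => [|k' ne_k'k].
  by rewrite addr0; apply: eq_bigr => y _; rewrite wt_grid eqxx mulr1.
by apply: big1 => y _; rewrite wt_grid val_eqE (negbTE ne_k'k) mulr0.
Qed.

Lemma piwE (k : 'I_m.+1) : piw D k = D k true + D k false.
Proof. by rewrite /piw sum_grid_wt big_bool. Qed.

Lemma piw_ge0 (k : 'I_m.+1) : 0 <= piw D k.
Proof. by rewrite piwE addr_ge0 ?D_ge0. Qed.

Lemma sum_piw : \sum_(k < m.+1) piw D k = 1.
Proof. by case: D_distr => _ <-; apply: eq_bigr => k _; rewrite piwE big_bool. Qed.

Lemma piw_qw (k : 'I_m.+1) : piw D k * qw D k = D k true.
Proof.
rewrite /qw; have [pi0|pi_neq0] := eqVneq (piw D k) 0.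
  rewrite mulr0; apply/esym/eqP; move/eqP: pi0; rewrite piwE paddr_eq0 ?D_ge0 //.
  by case/andP.
under eq_bigr do under eq_bigr do rewrite mulrAC.
by rewrite sum_grid_wt big_bool /= mulr1 mulr0 addr0 mulrC divfK.
Qed.

Lemma qw_bounds (k : 'I_m.+1) : 0 <= qw D k <= 1.
Proof.
have [pi0|pi_neq0] := eqVneq (piw D k) 0; first by rewrite /qw pi0 eqxx lexx ler01.
have pi_gt0 : 0 < piw D k by rewrite lt_def pi_neq0 piw_ge0.
have -> : qw D k = D k true / piw D k by rewrite -(piw_qw k) mulrC mulKf.
by rewrite divr_ge0 ?D_ge0 ?piw_ge0 //= ler_pdivrMr // mul1r piwE lerDl D_ge0.
Qed.

Lemma point_gainE (A : Type) (U : A -> bool -> R) (k : 'I_m.+1) (a b : A) :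
  \sum_(y : bool) D k y * (U b y - U a y) =
  piw D k * (exp_util U (qw D k) b - exp_util U (qw D k) a).
Proof.
have q_true := piw_qw k.
have q_false : piw D k * (1 - qw D k) = D k false.
  by rewrite mulrBr mulr1 q_true piwE addrAC subrr add0r.
by rewrite big_bool /= -q_true -q_false /exp_util; ring.
Qed.

Lemma scdl_term_le_SCDL i : (i <= m)%N ->
  \sum_(k < m.+1) piw D k * scdl_term m i k (qw D k) <= SCDL D.
Proof.
rewrite -ltnS => lt_im; apply: le_trans (le_bigmax _ _ (Ordinal lt_im)) => /=.
rewrite [X in _ <= X + _]big_mkcond [X in _ <= _ + X]big_mkcond -big_split /=.
apply: ler_sum => k _.
by rewrite /scdl_term mulrDr; case: ifP; case: ifP; rewrite ?mulr0.
Qed.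

Lemma threshold_risk_le_SCDL j : (j <= m)%N ->
  \sum_(k < m.+1) piw D k * threshold_regret m j k (qw D k) <= SCDL D + m%:R^-1.
Proof.
move=> le_jm.
have via_scdl_term i : (i <= m)%N ->
    (forall k : 'I_m.+1,
       threshold_regret m j k (qw D k) <= scdl_term m i k (qw D k) + m%:R^-1) ->
    \sum_(k < m.+1) piw D k * threshold_regret m j k (qw D k) <= SCDL D + m%:R^-1.
  move=> le_im psi_le; apply: le_trans (_ : \sum_(k < m.+1)
    piw D k * (scdl_term m i k (qw D k) + m%:R^-1) <= _).
    by apply: ler_sum => k _; rewrite ler_wpM2l ?piw_ge0.
  under eq_bigr do rewrite mulrDr.
  by rewrite big_split /= -mulr_suml sum_piw mul1r lerD2r scdl_term_le_SCDL.
have /andP[qj_ge0 _] := qw_bounds (Ordinal (le_jm : (j < m.+1)%N)).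
have [le_pq|lt_qp] := lerP (grid R m j) (qw D j).
  apply: (via_scdl_term j le_jm) => k; apply: threshold_regret_le_scdl_term.
  by move=> /eqP eq_kj; rewrite eq_kj.
have j_gt0 : (0 < j)%N.
  rewrite lt0n; apply: contraTneq lt_qp => j0.
  by rewrite -leNgt (le_trans _ qj_ge0) // j0 /grid mul0r.
apply: (via_scdl_term j.-1 (leq_trans (leq_pred j) le_jm)) => k.
have := @threshold_regret_le_scdl_term_pred R m j.-1 k (qw D k).
by rewrite prednK //; apply=> /eqP ->; apply: ltW.
Qed.

Lemma swap_gain_le_threshold_mixture (A : Type) (U : A -> bool -> R)
    (r : R -> A) (sigma : A -> A) :
  (forall a y, 0 <= U a y <= 1) -> is_best_response U r ->
  swap_gain D U r sigma <=
  \sum_(0 <= j < m.+1)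
    kink m U r j * \sum_(k < m.+1) piw D k * threshold_regret m j k (qw D k).
Proof.
move=> U01 r_best; rewrite /swap_gain.
under eq_bigr do rewrite point_gainE.
apply: le_trans (_ : \sum_(k < m.+1) piw D k *
    \sum_(0 <= j < m.+1) kink m U r j * threshold_regret m j k (qw D k) <= _).
  apply: ler_sum => k _; rewrite ler_wpM2l ?piw_ge0 //.
  exact: (regret_le_threshold_mixture m_gt0 U01 r_best _ (ltn_ord k) (qw_bounds k)).
under eq_bigr do rewrite mulr_sumr.
rewrite exchange_big /=; apply: ler_sum => j _; rewrite mulr_sumr.
by apply: ler_sum => k _; rewrite mulrCA.
Qed.

End GridDistribution.

Theorem lemma4p7 (R : realFieldType) (m : nat) (hm : (0 < m)%N)
  (D : 'I_m.+1 -> bool -> R) (hD : is_distr D)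
  (A : Type) (U : A -> bool -> R)
  (hU : forall a y, 0 <= U a y <= 1)
  (r : R -> A) (hr : is_best_response U r) (sigma : A -> A) :
  swap_gain D U r sigma <= 2 * SCDL D + 2 / m%:R.
Proof.
apply: le_trans (swap_gain_le_threshold_mixture hm hD sigma hU hr) _.
apply: le_trans (_ : \sum_(0 <= j < m.+1) kink m U r j * (SCDL D + m%:R^-1) <= _).
  apply: ler_sum_nat => j /andP[_ le_jm].
  by rewrite ler_wpM2l ?(kink_ge0 hm hU hr) ?(threshold_risk_le_SCDL hm hD).
by rewrite -mulr_suml sum_kink mulrDr.
Qed.
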